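(* Let $n$ be a positive integer and let $G\subset\mathrm{GL}_2(\mathbb{Z}/n)$ be a subgroup containing $\mathrm{SL}_2^+(\mathbb{Z}/n)$, acting on $(\mathbb{Z}/n)^2$ tautologically. If $n$ is odd, then $H^1(G,(\mathbb{Z}/n)^2)=0$. If $n=2^r m$ with $m$ odd and $r\geq1$, then the abelian group $H^1(G,(\mathbb{Z}/n)^2)$ is annihilated by $2^{r-1}$.
   Context: For an integer $n>1$, $\mathrm{SL}_2^+(\mathbb{Z}/n)$ is defined as $\mathrm{SL}_2(\mathbb{Z}/n)$ if $n$ is odd, and, if $n$ is even, as the kernel of the composite $\mathrm{SL}_2(\mathbb{Z}/n)\to\mathrm{SL}_2(\mathbb{Z}/2)\cong S_3\to\{\pm1\}$ of reduction modulo $2$ and the signature. *)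

From HB Require Import structures.
From mathcomp Require Import all_boot all_order all_algebra all_fingroup.
Set Implicit Arguments. Unset Strict Implicit. Unset Printing Implicit Defensive.
Import GRing.Theory.
Local Open Scope ring_scope.
Local Open Scope group_scope.

(* Reduction modulo 2 of a matrix over Z/n (a ring map when n is even). *)
Definition red2 (n : nat) (A : 'M['Z_n]_2) : 'M['Z_2]_2 :=
  map_mx (fun x : 'Z_n => (inZp (val x) : 'Z_2)) A.

(* Permutation of (Z/2)^2 (row vectors) induced by an invertible B : v |-> v B;
   the identity when B is not invertible. *)
Definition mx_perm (B : 'M['Z_2]_2) : {perm 'rV['Z_2]_2} :=
  match boolP (B \in unitmx) with
  | AltTrue H => perm (can_inj (mulmxK H))
  | AltFalse _ => 1%g
  end.

Definition SL2plus (n : nat) : {set {'GL_2['Z_n]}} :=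
  [set g : {'GL_2['Z_n]} | (\det (GLval g) == 1%R)
     && (odd n || ~~ odd_perm (mx_perm (red2 (GLval g))))].

Definition cocycle (n : nat) (G : {set {'GL_2['Z_n]}})
    (f : {'GL_2['Z_n]} -> 'cV['Z_n]_2) : Prop :=
  forall g h, g \in G -> h \in G -> f (g * h)%g = (f g + GLval g *m f h)%R.

Definition coboundary (n : nat) (G : {set {'GL_2['Z_n]}})
    (f : {'GL_2['Z_n]} -> 'cV['Z_n]_2) : Prop :=
  exists v : 'cV['Z_n]_2, forall g, g \in G -> f g = (GLval g *m v - v)%R.

From HB Require Import structures.
From mathcomp Require Import all_boot all_order all_algebra all_fingroup.
From mathcomp Require Import ring zify.
Set Implicit Arguments. Unset Strict Implicit. Unset Printing Implicit Defensive.
Import GRing.Theory.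
Local Open Scope ring_scope.

(* The element -1 of SL_2^+ is central, so the cocycle identity for the
   commuting pair (-1, g) gives 2 f(g) = (g - 1) (-f(-1)): twice every cocycle
   is a coboundary.  This settles n odd and r >= 2.  For n = 2m with m odd,
   e = m is an idempotent of Z/n and it remains to see that e f is a
   coboundary.  Put t = 1 + e T with T = [[1,1],[1,0]]; then t lies in SL_2^+,
   and since T mod 2 generates the normal subgroup A_3 of GL_2(Z/2) = S_3,
   every g satisfies g t = t g or g t = t^2 g.  For a cocycle u with e u = u
   vanishing at t, hence at t^2, either relation forces (t - 1) u(g) =
   e T u(g) = 0, so u = 0.  Apply this to e f minus the coboundary that agrees
   with e f at t. *)

Lemma ord2_ind (P : 'I_2 -> Prop) : P 0 -> P 1 -> forall i, P i.
Proof.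
move=> P0 P1 [[|[|k]] hk] //.
- by have -> : Ordinal hk = 0 by apply/val_inj.
- by have -> : Ordinal hk = 1 by apply/val_inj.
Qed.

Lemma mulmx2E (R : pzSemiRingType) (A B : 'M[R]_2) i j :
  (A *m B) i j = A i 0 * B 0 j + A i 1 * B 1 j.
Proof.
rewrite !mxE big_ord_recl big_ord_recl big_ord0 addr0.
by have -> : lift ord0 ord0 = 1 :> 'I_2 by apply/val_inj.
Qed.

Lemma det_mx22 (R : comPzRingType) (A : 'M[R]_2) :
  \det A = A 0 0 * A 1 1 - A 0 1 * A 1 0.
Proof.
rewrite (expand_det_row _ 0) big_ord_recl big_ord_recl big_ord0 addr0.
rewrite /cofactor !det_mx11 !mxE /= expr0 expr1 !mul1r mulN1r mulrN.
by congr (A _ _ * A _ _ - A _ _ * A _ _); apply/val_inj.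
Qed.

Lemma GL_of_unitmx n (A : 'M['Z_n]_2) :
  A \in unitmx -> exists g : {'GL_2['Z_n]}, GLval g = A.
Proof.
by move=> Au; exists (insubd (1%g : {'GL_2['Z_n]}) A); rewrite insubdK.
Qed.

Lemma scalemx_kernel_linv (R : comPzRingType) k (a : R) (P T : 'M[R]_k)
    (x : 'cV[R]_k) :
  P *m T = 1%:M -> (a *: T) *m x = 0 -> a *: x = 0.
Proof.
by move=> PT Tx; rewrite -[x]mul1mx -PT -mulmxA scalemxAr scalemxAl Tx mulmx0.
Qed.

Lemma GLval_inj n : injective (@GLval 2 'Z_n).
Proof. exact: val_inj. Qed.

Lemma odd_perm_order3 (T : finType) (s : {perm T}) :
  (s * s * s = 1)%g -> ~~ odd_perm s.
Proof.
move/(congr1 (@odd_perm _)); rewrite !odd_permM odd_perm1.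
by case: (odd_perm s).
Qed.

Lemma mx_perm_even (B : 'M['Z_2]_2) :
  B *m B *m B = 1%:M -> ~~ odd_perm (mx_perm B).
Proof.
move=> B3; rewrite /mx_perm.
destruct (boolP (B \in unitmx)) as [Bu | _]; last by rewrite odd_perm1.
apply: odd_perm_order3; apply/permP => x.
by rewrite !permM !permE -2!mulmxA [B *m (B *m B)]mulmxA B3 mulmx1.
Qed.

Definition Zp_odd n (x : 'Z_n) : bool := odd (val x).

Lemma red2E n (A : 'M['Z_n]_2) i j : red2 A i j = (Zp_odd (A i j))%:R.
Proof. by rewrite mxE; apply/val_inj; rewrite /= /Zp_odd modn2; case: odd. Qed.

Lemma even_mx_double n p q (A : 'M['Z_n]_(p, q)) :
  (forall i j, ~~ Zp_odd (A i j)) -> exists B : 'M['Z_n]_(p, q), A = 2%:R *: B.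
Proof.
move=> Aeven; exists (\matrix_(i, j) ((val (A i j))./2)%:R).
apply/matrixP => i j; rewrite !mxE -natrM mul2n -[LHS]natr_Zp.
have := Aeven i j; rewrite /Zp_odd => /negbTE Aij.
by rewrite -[in LHS](odd_double_half (A i j)) Aij.
Qed.

Section EvenModulus.

Variable n : nat.
Hypotheses (n_gt1 : (1 < n)%N) (n_even : ~~ odd n).

Lemma Zp_odd_nat k : Zp_odd (k%:R : 'Z_n) = odd k.
Proof. by rewrite /Zp_odd /= val_Zp_nat // odd_mod //; apply/negbTE. Qed.

Lemma Zp_odd1 : Zp_odd (1 : 'Z_n).
Proof. exact: (Zp_odd_nat 1). Qed.

Lemma Zp_oddD (x y : 'Z_n) : Zp_odd (x + y) = Zp_odd x (+) Zp_odd y.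
Proof. by rewrite -[x]natr_Zp -[y]natr_Zp -natrD !Zp_odd_nat oddD. Qed.

Lemma Zp_oddM (x y : 'Z_n) : Zp_odd (x * y) = Zp_odd x && Zp_odd y.
Proof. by rewrite -[x]natr_Zp -[y]natr_Zp -natrM !Zp_odd_nat oddM. Qed.

Lemma Zp_oddB (x y : 'Z_n) : Zp_odd (x - y) = Zp_odd x (+) Zp_odd y.
Proof. by rewrite -[in RHS](subrK y x) (Zp_oddD (x - y)) addbK. Qed.

Lemma Zp_oddN (x : 'Z_n) : Zp_odd (- x) = Zp_odd x.
Proof. by rewrite -sub0r Zp_oddB. Qed.

Lemma Zp_odd_unit (x : 'Z_n) : x \is a GRing.unit -> Zp_odd x.
Proof.
by case/unitrP=> y [yx _]; have := Zp_odd1; rewrite -yx Zp_oddM => /andP[].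
Qed.

Lemma Zp_odd_mx1 i j : Zp_odd ((1%:M : 'M['Z_n]_2) i j) = (i == j).
Proof. by rewrite mxE; case: (i == j); rewrite ?Zp_odd1. Qed.

End EvenModulus.

Definition fibmx n : 'M['Z_n]_2 :=
  \matrix_(i, j) (if (i == 1) && (j == 1) then 0 else 1).

Definition fibmx_inv n : 'M['Z_n]_2 :=
  \matrix_(i, j)
    (if i == 0 then (if j == 0 then 0 else 1) else (if j == 0 then 1 else -1)).

Lemma fibmx_invK n : fibmx_inv n *m fibmx n = 1.
Proof.
apply/matrixP => i j; rewrite mulmx2E !mxE.
by elim/ord2_ind: i; elim/ord2_ind: j; rewrite /=; ring.
Qed.

Lemma fibmxK n : fibmx n *m fibmx_inv n = 1.
Proof.
apply/matrixP => i j; rewrite mulmx2E !mxE.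
by elim/ord2_ind: i; elim/ord2_ind: j; rewrite /=; ring.
Qed.

Section FibmxParity.

Variable n : nat.
Hypotheses (n_gt1 : (1 < n)%N) (n_even : ~~ odd n).

Lemma fibmx_conj_even (g : 'M['Z_n]_2) : \det g \is a GRing.unit ->
  (forall i j, ~~ Zp_odd ((g *m fibmx n - fibmx n *m g) i j)) \/
  (forall i j, ~~ Zp_odd ((g *m fibmx n - (fibmx n *m fibmx n) *m g) i j)).
Proof.
move/(Zp_odd_unit n_gt1 n_even).
rewrite det_mx22 !(Zp_oddB, Zp_oddM) // => det_odd.
have oddT i j : Zp_odd (fibmx n i j) = ~~ ((i == 1) && (j == 1)).
  by rewrite mxE; case: ifP; rewrite ?Zp_odd1.
have oddTT i j : Zp_odd ((fibmx n *m fibmx n) i j) = ~~ ((i == 0) && (j == 0)).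
  rewrite mulmx2E !(Zp_oddD, Zp_oddM) // !oddT.
  by elim/ord2_ind: i; elim/ord2_ind: j.
have oddC B i j : Zp_odd ((g *m fibmx n - B *m g) i j) =
    (Zp_odd (g i 0) && Zp_odd (fibmx n 0 j)
       (+) Zp_odd (g i 1) && Zp_odd (fibmx n 1 j))
    (+) (Zp_odd (B i 0) && Zp_odd (g 0 j) (+) Zp_odd (B i 1) && Zp_odd (g 1 j)).
  by rewrite mxE [X in _ + X]mxE Zp_oddB // !mulmx2E !(Zp_oddD, Zp_oddM).
pose D B i j := ~~ Zp_odd ((g *m fibmx n - B *m g) i j).
have ord2_all (P : 'I_2 -> 'I_2 -> bool) :
    [&& P 0 0, P 0 1, P 1 0 & P 1 1] -> forall i j, P i j.
  by case/and4P=> ? ? ? ? i j; elim/ord2_ind: i; elim/ord2_ind: j.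
suff /orP[/ord2_all ? | /ord2_all ?] :
    [&& D (fibmx n) 0 0, D (fibmx n) 0 1, D (fibmx n) 1 0 & D (fibmx n) 1 1] ||
    [&& D (fibmx n *m fibmx n) 0 0, D (fibmx n *m fibmx n) 0 1,
        D (fibmx n *m fibmx n) 1 0 & D (fibmx n *m fibmx n) 1 1]
  by [left | right].
rewrite /D !oddC !oddT !oddTT /=; move: det_odd.
by case: (Zp_odd (g 0 0)); case: (Zp_odd (g 0 1)); case: (Zp_odd (g 1 0));
  case: (Zp_odd (g 1 1)).
Qed.

End FibmxParity.

Section Cocycles.

Variables (n : nat) (G : {group {'GL_2['Z_n]}}).
Implicit Types (f u : {'GL_2['Z_n]} -> 'cV['Z_n]_2) (g s t z : {'GL_2['Z_n]}).

Lemma cocycleZ a f : cocycle G f -> cocycle G (fun g => a *: f g).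
Proof. by move=> fc g h gG hG; rewrite fc // scalerDr scalemxAr. Qed.

Lemma cocycleB_principal f v :
  cocycle G f -> cocycle G (fun g => f g - (GLval g *m v - v)).
Proof.
move=> fc g h gG hG; rewrite fc // GL_MxE !mulmxBr mulmxA.
by rewrite [RHS]addrACA -opprD [_ - v + _]addrC addrA subrK.
Qed.

Lemma coboundaryD f1 f2 :
  coboundary G f1 -> coboundary G f2 -> coboundary G (fun g => f1 g + f2 g).
Proof.
move=> [v1 f1E] [v2 f2E]; exists (v1 + v2) => g gG.
by rewrite f1E // f2E // mulmxDr addrACA opprD.
Qed.

Lemma coboundaryZ a f : coboundary G f -> coboundary G (fun g => a *: f g).
Proof.
by move=> [v fE]; exists (a *: v) => g gG; rewrite fE // scalerBr scalemxAr.
Qed.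

Lemma eq_coboundary f1 f2 :
  {in G, f1 =1 f2} -> coboundary G f1 -> coboundary G f2.
Proof. by move=> f12 [v f1E]; exists v => g gG; rewrite -f12 // f1E. Qed.

Lemma cocycle_commute f z g : cocycle G f -> z \in G -> g \in G ->
  (z * g = g * z)%g -> (GLval z - 1) *m f g = (GLval g - 1) *m f z.
Proof.
move=> fc zG gG zg; have := fc _ _ zG gG; rewrite zg fc // !mulmxBl !mul1mx.
move=> fE; apply/eqP; rewrite subr_eq addrAC [_ *m f z + _]addrC fE.
by rewrite addrAC subrr add0r.
Qed.

Lemma cocycle_conj_kernel u g t s : cocycle G u ->
  g \in G -> t \in G -> s \in G -> (g * t = s * g)%g -> u t = 0 -> u s = 0 ->
  (GLval s - 1) *m u g = 0.
Proof.
move=> uc gG tG sG gts ut us; have := uc _ _ gG tG.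
rewrite gts !uc // ut us mulmx0 addr0 add0r mulmxBl mul1mx => ->.
by rewrite subrr.
Qed.

End Cocycles.

Lemma SL2plus_opp1 n : (1 < n)%N ->
  exists z : {'GL_2['Z_n]}, GLval z = -1 /\ z \in SL2plus n.
Proof.
move=> n_gt1; have det_opp1 : \det (-1 : 'M['Z_n]_2) = 1.
  by rewrite -scaleN1r detZ det1 mulr1 sqrrN expr1n.
have [z zE] : exists z : {'GL_2['Z_n]}, GLval z = -1.
  by apply: GL_of_unitmx; rewrite unitmxE det_opp1 unitr1.
exists z; split=> //; rewrite inE zE det_opp1 eqxx /=.
case: (boolP (odd n)) => //= n_even; apply: mx_perm_even.
have -> : red2 (-1 : 'M['Z_n]_2) = 1%:M.
  apply/matrixP => i j; rewrite red2E // [X in Zp_odd X]mxE Zp_oddN //.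
  by rewrite Zp_odd_mx1 // mxE.
by rewrite !mulmx1.
Qed.

Section DoubleCocycle.

Variables (n : nat) (G : {group {'GL_2['Z_n]}}).
Hypotheses (n_gt1 : (1 < n)%N) (SL2plus_sub : SL2plus n \subset G).

Lemma cocycle_double_coboundary f :
  cocycle G f -> coboundary G (fun g => f g *+ 2).
Proof.
move=> fc; have [z [zE zS]] := SL2plus_opp1 n_gt1.
have zG : z \in G := subsetP SL2plus_sub z zS.
exists (- f z) => g gG.
have zg : (z * g = g * z)%g.
  by apply: GLval_inj; rewrite !GL_MxE zE mulNmx mulmxN mul1mx mulmx1.
rewrite mulr2n; have := cocycle_commute fc zG gG zg.
rewrite zE -opprD mulNmx mulmxDl mulmxBl !mul1mx => /(canRL (@opprK _)) ->.
by rewrite opprB mulmxN opprK addrC.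
Qed.

End DoubleCocycle.

Section HalfModulus.

Variables (n m : nat) (G : {group {'GL_2['Z_n]}}).
Hypotheses (m_odd : odd m) (n_2m : n = (2 * m)%N).
Hypothesis SL2plus_sub : SL2plus n \subset G.

Let n_gt1 : (1 < n)%N.
Proof. by move: m_odd; rewrite n_2m; case: m => // k _; lia. Qed.
Let n_even : ~~ odd n. Proof. by rewrite n_2m oddM. Qed.

(* e is the idempotent of the factor Z/2 of Z/n = Z/2 x Z/m. *)
Local Notation e := (m%:R : 'Z_n).

Lemma half_idem : e * e = e.
Proof.
rewrite -natrM; have -> : (m * m = m + n * m./2)%N.
  by rewrite n_2m -{1 2 3}(odd_double_half m) m_odd; lia.
by rewrite natrD natrM pchar_Zp // mul0r addr0.
Qed.

Lemma half_double : e *+ 2 = 0.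
Proof. by rewrite -mulrnA mulnC -n_2m pchar_Zp. Qed.

Lemma unipotent_sqr (B : 'M['Z_n]_2) :
  (1 + e *: B) *m (1 + e *: B) = 1 + e *: (B *m B).
Proof.
rewrite mulmxDr mulmx1 mulmxDl mul1mx -scalemxAl -scalemxAr scalerA half_idem.
by rewrite addrA -[1 + _ + _]addrA -scalerDl -mulr2n half_double scale0r addr0.
Qed.

Lemma unipotent_comm (A B C Z : 'M['Z_n]_2) :
  A *m B - C *m A = 2%:R *: Z -> A *m (1 + e *: B) = (1 + e *: C) *m A.
Proof.
move=> ABC; rewrite mulmxDr mulmx1 mulmxDl mul1mx -scalemxAr -scalemxAl.
have -> : A *m B = C *m A + 2%:R *: Z by rewrite -ABC addrC subrK.
by rewrite scalerDr scalerA mulr_natr half_double scale0r addr0.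
Qed.

Lemma unipotent_SL2plus :
  exists t : {'GL_2['Z_n]}, GLval t = 1 + e *: fibmx n /\ t \in SL2plus n.
Proof.
have det_t : \det (1 + e *: fibmx n) = 1.
  by rewrite det_mx22 !mxE /= mulr1 mulr0 mulr1n mulr0n add0r addr0 half_idem
    mulr1 addrK.
have [t tE] : exists t : {'GL_2['Z_n]}, GLval t = 1 + e *: fibmx n.
  by apply: GL_of_unitmx; rewrite unitmxE det_t unitr1.
exists t; split=> //; rewrite inE tE det_t eqxx (negbTE n_even) /=.
have -> : red2 (1 + e *: fibmx n) = 1 + fibmx 2.
  apply/matrixP => i j; rewrite red2E // [X in Zp_odd X]mxE Zp_oddD //.
  rewrite Zp_odd_mx1 // [X in Zp_odd X]mxE Zp_oddM // Zp_odd_nat // m_odd !mxE.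
  by elim/ord2_ind: i; elim/ord2_ind: j; rewrite /= ?Zp_odd1; apply/val_inj.
apply: mx_perm_even; apply/matrixP => i j; rewrite !mulmx2E !mxE.
by elim/ord2_ind: i; elim/ord2_ind: j; apply/val_inj.
Qed.

Lemma unipotent_normal (t g : {'GL_2['Z_n]}) : GLval t = 1 + e *: fibmx n ->
  (g * t = t * g)%g \/ (g * t = t * t * g)%g.
Proof.
move=> tE; have g_det : \det (GLval g) \is a GRing.unit.
  by rewrite -unitmxE GL_unitmx.
have [] := fibmx_conj_even n_gt1 n_even g_det;
  move=> /even_mx_double [Z gZ]; [left | right];
  apply: GLval_inj; rewrite !GL_MxE tE ?unipotent_sqr;
  exact: unipotent_comm gZ.
Qed.

Lemma cocycle_half_coboundary f :
  cocycle G f -> coboundary G (fun g => e *: f g).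
Proof.
move=> fc; have [t [tE tS]] := unipotent_SL2plus.
have tG : t \in G := subsetP SL2plus_sub t tS.
have tE1 : GLval t - 1 = e *: fibmx n by rewrite tE addrC addKr.
have ttE1 : GLval (t * t)%g - 1 = e *: (fibmx n *m fibmx n).
  by rewrite GL_MxE tE unipotent_sqr addrC addKr.
have eK x : e *: (e *: x) = e *: x :> 'cV['Z_n]_2 by rewrite scalerA half_idem.
pose v := fibmx_inv n *m (e *: f t).
have eKv : e *: v = v by rewrite scalemxAr eK.
have vt : e *: f t = GLval t *m v - v.
  rewrite -{2}[v]mul1mx -mulmxBl tE1 -scalemxAl mulmxA fibmxK.
  by rewrite mul1mx eK.
pose u g := e *: f g - (GLval g *m v - v).
have uc : cocycle G u := cocycleB_principal v (cocycleZ e fc).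
have ut : u t = 0 by rewrite /u vt subrr.
have utt : u (t * t)%g = 0 by rewrite uc // ut mulmx0 addr0.
exists v => g gG; apply/eqP; rewrite -subr_eq0 -/(u g).
have <- : e *: u g = u g by rewrite /u scalerBr eK scalerBr scalemxAr eKv.
have [gt | gtt] := unipotent_normal g tE.
- apply/eqP/(scalemx_kernel_linv (fibmx_invK n)); rewrite -tE1.
  exact: (cocycle_conj_kernel uc gG tG tG gt ut ut).
- have invK2 : (fibmx_inv n *m fibmx_inv n) *m (fibmx n *m fibmx n) = 1.
    by rewrite mulmxA -(mulmxA (fibmx_inv n)) fibmx_invK mulmx1 fibmx_invK.
  apply/eqP/(scalemx_kernel_linv invK2); rewrite -ttE1.
  exact: cocycle_conj_kernel uc gG tG (groupM tG tG) gtt ut utt.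
Qed.

End HalfModulus.

Lemma uphalf_double k : odd k -> (uphalf k * 2)%N = k.+1.
Proof.
by move=> k_odd; rewrite muln2 -[RHS](odd_double_half k.+1) /= k_odd.
Qed.

Theorem proposition4p2 (n : nat) (n_gt1 : (1 < n)%N)
    (G : {group {'GL_2['Z_n]}}) (hG : SL2plus n \subset G) :
  (odd n ->
     forall f : {'GL_2['Z_n]} -> 'cV['Z_n]_2, cocycle G f -> coboundary G f)
  /\
  (forall r m : nat, odd m -> (0 < r)%N -> n = (2 ^ r * m)%N ->
     forall f : {'GL_2['Z_n]} -> 'cV['Z_n]_2, cocycle G f ->
       coboundary G (fun g => (f g *+ 2 ^ r.-1)%R)).
Proof.
split=> [n_odd f fc | [|[|r]] m m_odd // _ n_2rm f fc].
- have half2 : ((uphalf n)%:R * 2%:R : 'Z_n) = 1.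
    by rewrite -natrM uphalf_double // -natr1 pchar_Zp // add0r.
  apply: (eq_coboundary (f1 := fun g => (uphalf n)%:R *: (f g *+ 2))).
    by move=> g _; rewrite -scaler_nat scalerA half2 scale1r.
  exact/coboundaryZ/(cocycle_double_coboundary n_gt1 hG).
- rewrite expn1 in n_2rm.
  have half2 : ((uphalf m)%:R * 2%:R : 'Z_n) = 1 + m%:R.
    by rewrite -natrM uphalf_double // -nat1r.
  apply: (eq_coboundary (f1 := fun g =>
    (uphalf m)%:R *: (f g *+ 2) + (-1) *: (m%:R *: f g))).
    move=> g _; rewrite -scaler_nat scalerA half2 scaleN1r.
    by rewrite scalerDl scale1r addrK.
  apply: coboundaryD; apply: coboundaryZ.
    exact: (cocycle_double_coboundary n_gt1 hG).
  exact: (cocycle_half_coboundary m_odd n_2rm hG).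
- apply: (eq_coboundary (f1 := fun g => (2 ^ r)%:R *: (f g *+ 2))).
    by move=> g _; rewrite -scaler_nat scalerA -natrM expnSr scaler_nat.
  exact/coboundaryZ/(cocycle_double_coboundary n_gt1 hG).
Qed.
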